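(* Let $A = \begin{bmatrix} E & B \\ B^\top & D \end{bmatrix}$ be a symmetric $2N \times 2N$ real matrix, where $E, D$ are symmetric $N\times N$ matrices and $B$ is an $N \times N$ matrix, and fix $\epsilon_0 > 0$. If for all $\epsilon \in (0,\epsilon_0)$ there exist symmetric $N\times N$ matrices $X_\epsilon, -Y_\epsilon$ satisfying $$\begin{bmatrix} X_\epsilon & 0 \\ 0 & -Y_\epsilon \end{bmatrix} \leq A + \epsilon A^2,$$ then $X_\epsilon \leq E + \epsilon_0(E^2 + B B^\top)$ and $-Y_\epsilon \leq D + \epsilon_0(D^2 + B^\top B)$ for all $\epsilon \in (0,\epsilon_0)$.
   Context: Matrices are real; $\mathbb{S}(N)$ denotes the space of symmetric $N\times N$ real matrices, ordered by Löwner's partial order: $P \leq Q$ iff $\langle Px,x\rangle \leq \langle Qx,x\rangle$ for all $x$. In the application, $A = D^2 z(\hat x,\hat y)$ is the Hessian of a $C^2$ test function $z(x,y)$ at a local maximum point of $u(x)-v(y)-z(x,y)$, and $X_\epsilon, Y_\epsilon$ are the matrices produced by the theorem of sums, which satisfy $\begin{bmatrix} X_\epsilon & 0 \\ 0 & -Y_\epsilon \end{bmatrix} \leq A + \epsilon A^2$. *)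

From mathcomp Require Import all_boot all_order all_algebra.
Set Implicit Arguments. Unset Strict Implicit. Unset Printing Implicit Defensive.
Import Order.TTheory GRing.Theory Num.Theory.
Local Open Scope ring_scope.

Definition symmx (R : realFieldType) (n : nat) (P : 'M[R]_n) : Prop := P^T = P.

Definition loewner_le (R : realFieldType) (n : nat) (P Q : 'M[R]_n) : Prop :=
  forall x : 'cV[R]_n, (x^T *m P *m x) 0 0 <= (x^T *m Q *m x) 0 0.

From mathcomp Require Import all_boot all_order all_algebra.
Import Order.TTheory GRing.Theory Num.Theory.
Set Implicit Arguments. Unset Strict Implicit. Unset Printing Implicit Defensive.
Local Open Scope ring_scope.

(* Testing the Loewner inequality on vectors supported in one block shows that
   it passes to the diagonal blocks.  The diagonal blocks of A + eps A^2 are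
   E + eps (E^2 + B B^T) and D + eps (D^2 + B^T B); the added matrices are Gram
   matrices, hence positive semidefinite, so enlarging eps to eps0 only
   increases the right-hand sides. *)

Section Loewner.

Variable R : realFieldType.

Lemma quad_form_block_mx_ul (m n : nat) (P : 'M[R]_(m + n)) (x : 'cV[R]_m) :
  ((col_mx x 0)^T *m P *m col_mx x 0) 0 0 = (x^T *m ulsubmx P *m x) 0 0.
Proof.
rewrite -[P]submxK tr_col_mx mul_row_block mul_row_col block_mxKul.
by rewrite trmx0 !mul0mx !mulmx0 !addr0.
Qed.

Lemma quad_form_block_mx_dr (m n : nat) (P : 'M[R]_(m + n)) (x : 'cV[R]_n) :
  ((col_mx 0 x)^T *m P *m col_mx 0 x) 0 0 = (x^T *m drsubmx P *m x) 0 0.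
Proof.
rewrite -[P]submxK tr_col_mx mul_row_block mul_row_col block_mxKdr.
by rewrite trmx0 !mul0mx !mulmx0 !add0r.
Qed.

Lemma quad_form0 (n : nat) (x : 'cV[R]_n) : (x^T *m 0 *m x) 0 0 = 0.
Proof. by rewrite mulmx0 mul0mx mxE. Qed.

Lemma quad_formD (n : nat) (P Q : 'M[R]_n) (x : 'cV[R]_n) :
  (x^T *m (P + Q) *m x) 0 0 = (x^T *m P *m x) 0 0 + (x^T *m Q *m x) 0 0.
Proof. by rewrite mulmxDr mulmxDl mxE. Qed.

Lemma quad_formZ (n : nat) (e : R) (P : 'M[R]_n) (x : 'cV[R]_n) :
  (x^T *m (e *: P) *m x) 0 0 = e * (x^T *m P *m x) 0 0.
Proof. by rewrite -scalemxAr -scalemxAl mxE. Qed.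

Lemma loewner_le_trans (n : nat) (P Q S : 'M[R]_n) :
  loewner_le P Q -> loewner_le Q S -> loewner_le P S.
Proof. by move=> lePQ leQS x; apply: le_trans (lePQ x) (leQS x). Qed.

Lemma loewner_le_ulsub (m n : nat) (P Q : 'M[R]_(m + n)) :
  loewner_le P Q -> loewner_le (ulsubmx P) (ulsubmx Q).
Proof. by move=> lePQ x; rewrite -!quad_form_block_mx_ul. Qed.

Lemma loewner_le_drsub (m n : nat) (P Q : 'M[R]_(m + n)) :
  loewner_le P Q -> loewner_le (drsubmx P) (drsubmx Q).
Proof. by move=> lePQ x; rewrite -!quad_form_block_mx_dr. Qed.

Lemma loewner_le_add_psd (n : nat) (P Q : 'M[R]_n) :
  loewner_le 0 P -> loewner_le 0 Q -> loewner_le 0 (P + Q).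
Proof.
move=> psdP psdQ x; move: (psdP x) (psdQ x).
rewrite !quad_form0 quad_formD; exact: addr_ge0.
Qed.

Lemma loewner_le_gram (m n : nat) (M : 'M[R]_(n, m)) : loewner_le 0 (M *m M^T).
Proof.
move=> x; rewrite quad_form0.
have -> : x^T *m (M *m M^T) *m x = (M^T *m x)^T *m (M^T *m x).
  by rewrite trmx_mul trmxK !mulmxA.
by rewrite mxE; apply: sumr_ge0 => i _; rewrite mxE -expr2 sqr_ge0.
Qed.

Lemma loewner_le_scale_psd (n : nat) (P Q : 'M[R]_n) (e e' : R) :
  loewner_le 0 Q -> 0 <= e -> e <= e' ->
  loewner_le (P + e *: Q) (P + e' *: Q).
Proof.
move=> psdQ e_ge0 le_ee' x; move: (psdQ x); rewrite quad_form0 => Qx_ge0.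
rewrite !quad_formD !quad_formZ lerD2l.
exact: ler_wpM2r.
Qed.

End Loewner.

Theorem lemma2 (R : realFieldType) (N : nat) (E B D : 'M[R]_N) (eps0 : R) :
  symmx E -> symmx D -> 0 < eps0 ->
  forall (eps : R) (X Y : 'M[R]_N),
    0 < eps -> eps < eps0 ->
    symmx X -> symmx (- Y) ->
    loewner_le (block_mx X 0 0 (- Y))
      (block_mx E B B^T D + eps *: (block_mx E B B^T D *m block_mx E B B^T D)) ->
    loewner_le X (E + eps0 *: (E *m E + B *m B^T)) /\
    loewner_le (- Y) (D + eps0 *: (D *m D + B^T *m B)).
Proof.
move=> symE symD _ eps X Y eps_gt0 eps_lt_eps0 _ _.
rewrite mulmx_block scale_block_mx add_block_mx => le_block.
have eps_ge0 := ltW eps_gt0; have eps_le_eps0 := ltW eps_lt_eps0.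
split.
- have psdE : loewner_le 0 (E *m E + B *m B^T).
    by apply: loewner_le_add_psd; [rewrite -{2}symE|]; apply: loewner_le_gram.
  have := loewner_le_ulsub le_block; rewrite !block_mxKul => le_X.
  exact: loewner_le_trans le_X (loewner_le_scale_psd _ psdE eps_ge0 eps_le_eps0).
- have psdD : loewner_le 0 (D *m D + B^T *m B).
    by apply: loewner_le_add_psd; [rewrite -{2}symD|rewrite -{2}[B]trmxK];
      apply: loewner_le_gram.
  have := loewner_le_drsub le_block; rewrite !block_mxKdr [B^T *m B + _]addrC => le_Y.
  exact: loewner_le_trans le_Y (loewner_le_scale_psd _ psdD eps_ge0 eps_le_eps0).
Qed.
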